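(* For each $k\in\mathbb{N}$ there is a graph of treewidth at most $k$ that contains every graph of treewidth at most $k$ as an induced subgraph.
   Context: All graphs are simple and countable. Treewidth is defined via tree-decompositions (bags indexed by a tree, each edge contained in a bag, each vertex's bags forming a nonempty subtree; width = maximum bag size minus one; treewidth = minimum width). *)

From Stdlib Require Import List Arith.
Import ListNotations.

Record graph : Type := Graph {
  vert :> Type;
  adj : vert -> vert -> Prop;
  adj_sym : forall x y, adj x y -> adj y x;
  adj_irrefl : forall x, ~ adj x x;
  countable : exists f : vert -> nat, forall x y, f x = f y -> x = y
}.

Arguments adj {g} _ _.

(* walk G x l y : x = v0, v1, ..., vn = y with l = [v1; ...; vn]. *)
Inductive walk (G : graph) : G -> list G -> G -> Prop :=
  | walk_nil : forall x, walk G x [] x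
  | walk_cons : forall x z l y, adj x z -> walk G z l y -> walk G x (z :: l) y.

Definition connected_set (G : graph) (S : G -> Prop) : Prop :=
  forall x y, S x -> S y -> exists l, walk G x l y /\ Forall S l.

(* A cycle: a closed walk x v1 ... vn (vn = x) with n >= 3 distinct vertices. *)
Definition has_cycle (G : graph) : Prop :=
  exists (x : G) (l : list G), walk G x l x /\ 3 <= length l /\ NoDup l.

Definition is_tree (T : graph) : Prop :=
  inhabited T /\ connected_set T (fun _ => True) /\ ~ has_cycle T.

Definition tree_decomposition (G T : graph) (B : T -> G -> Prop) : Prop :=
  is_tree T /\
  (forall u v : G, adj u v -> exists t, B t u /\ B t v) /\
  (forall v : G, (exists t, B t v) /\ connected_set T (fun t => B t v)).

Definition width_le (G T : graph) (B : T -> G -> Prop) (k : nat) : Prop :=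
  forall t : T, exists l : list G, length l <= k + 1 /\ forall v, B t v -> In v l.

Definition treewidth_le (G : graph) (k : nat) : Prop :=
  exists (T : graph) (B : T -> G -> Prop), tree_decomposition G T B /\ width_le G T B k.

Definition induced_subgraph (H G : graph) : Prop :=
  exists f : H -> G, (forall x y, f x = f y -> x = y) /\
                     (forall x y, adj x y <-> adj (f x) (f y)).

(* Its tree-decomposition is indexed by the universal tree of all finite
   sequences of codes; the node c :: w creates one new vertex (c, w), whose
   code c says which (at most k) vertices of the parent bag stay in the new
   bag, which of those are its neighbours, and carries a natural-number label.
   Bags then have at most k+1 vertices and each vertex lives on a downward path
   from its creation node (universal_treewidth).

   To embed a graph H with a tree-decomposition (T, B) of width k, root T and
   let top v be the highest bag containing v; the bags containing v are those
   below top v reached through such bags (bag_parent).  Visiting the bags from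
   the root downwards, each in a fixed order, we insert every vertex x at its
   top bag by one step of the universal tree that keeps the at most k vertices
   of that bag inserted before x and records which of them are neighbours of x.
   The label makes the map injective, and every edge is recorded when its
   later endpoint is inserted (embed_induced). *)

From Stdlib Require Import List Arith Lia Permutation Classical ClassicalEpsilon.
Import ListNotations.
From mathcomp Require ssrfun eqtype choice seq.

Lemma least_nat (P : nat -> Prop) :
  (exists n, P n) -> exists n, P n /\ forall m, P m -> n <= m.
Proof.
  intros [n Pn]. apply NNPP. intros Hno.
  assert (Hbelow : forall m j, j <= m -> ~ P j).
  { induction m as [|m IH]; intros j Hj Pj; apply Hno; exists j; split; auto.
    - intros; lia.
    - intros i Pi. destruct (le_lt_dec j i); auto.
      exfalso. apply (IH i); auto. lia. }
  exact (Hbelow n n (le_n n) Pn).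
Qed.

Lemma list_max_elem (A : Type) (d : A -> nat) (l : list A) :
  l <> [] -> exists m, In m l /\ forall z, In z l -> d z <= d m.
Proof.
  induction l as [|a l IH]; intros Hne; [congruence|].
  destruct l as [|b l'].
  - exists a. split; [left; auto|]. intros z [<-|[]]; auto.
  - destruct IH as [m [Hm Hmax]]; [congruence|].
    destruct (le_lt_dec (d a) (d m)).
    + exists m. split; [right; auto|]. intros z [<-|Hz]; auto.
    + exists a. split; [left; auto|]. intros z [<-|Hz]; auto.
      specialize (Hmax z Hz). lia.
Qed.

Lemma NoDup_map_on {A C} (f : A -> C) (s : list A) :
  (forall x y, In x s -> In y s -> f x = f y -> x = y) -> NoDup s -> NoDup (map f s).
Proof.
  induction s as [|a s IH]; intros Hinj Hnd; simpl; constructor; inversion Hnd; subst.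
  - intros Hin. apply in_map_iff in Hin. destruct Hin as [x [Ex Hx]].
    assert (x = a) by (apply Hinj; simpl; auto). subst; auto.
  - apply IH; auto. intros; apply Hinj; simpl; auto.
Qed.

Lemma NoDup_prefix_unique {A} (pre pre' rest rest' : list A) x :
  NoDup (pre ++ x :: rest) -> pre ++ x :: rest = pre' ++ x :: rest' -> pre = pre'.
Proof.
  revert pre'; induction pre as [|a pre IH]; intros pre' Nd E;
    destruct pre' as [|a' pre']; auto; simpl in E, Nd; apply NoDup_cons_iff in Nd;
    injection E as Ea Er.
  - exfalso. apply (proj1 Nd). rewrite Er. apply in_or_app. right. left. auto.
  - exfalso. apply (proj1 Nd). rewrite Ea. apply in_or_app. right. left. auto.
  - subst. f_equal. apply (IH pre'); tauto.
Qed.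

Lemma filter_length_lt {A} (g : A -> bool) l x :
  In x l -> g x = false -> length (filter g l) < length l.
Proof.
  induction l as [|a l IH]; simpl; [tauto|]. intros [<-|Hx] Hg.
  - rewrite Hg. pose proof (filter_length_le g l). lia.
  - destruct (g a); simpl; specialize (IH Hx Hg); lia.
Qed.

Lemma In_firstn {A} n (l : list A) x : In x (firstn n l) -> In x l.
Proof. intros Hx. rewrite <- (firstn_skipn n l). apply in_or_app. auto. Qed.

Fixpoint select {A : Type} (idx : list nat) (l : list A) : list A :=
  match idx with
  | [] => []
  | i :: idx' => match nth_error l i with
                 | Some x => x :: select idx' l
                 | None => select idx' l
                 end
  end.

Lemma In_select {A} idx (l : list A) x : In x (select idx l) -> In x l.
Proof.
  induction idx as [|i idx IH]; simpl; [tauto|].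
  destruct (nth_error l i) eqn:E; auto.
  intros [<-|Hx]; auto. eapply nth_error_In; eauto.
Qed.

Lemma select_map {A C} (f : A -> C) idx l : select idx (map f l) = map f (select idx l).
Proof.
  induction idx as [|i idx IH]; simpl; auto.
  rewrite nth_error_map. destruct (nth_error l i); simpl; rewrite IH; auto.
Qed.

Module CountableCodes.
Import eqtype choice seq.
Lemma code_lists_countable :
  exists f : list (list nat * list nat * nat) -> nat, forall x y, f x = f y -> x = y.
Proof. exists pickle. intros x y E. exact (ssrfun.pcan_inj (@pickleK _) E). Qed.
End CountableCodes.

Lemma walk_app (G : graph) x l1 y l2 z :
  walk G x l1 y -> walk G y l2 z -> walk G x (l1 ++ l2) z.
Proof. intros W; induction W; intros; simpl; auto. econstructor; eauto. Qed.

Lemma walk_rev (G : graph) x l y :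
  walk G x l y -> exists l', walk G y l' x /\ y :: l' = rev (x :: l).
Proof.
  intros W; induction W as [x|x z l y A W IH].
  - exists []. split; [constructor | reflexivity].
  - destruct IH as [l' [W' E]]. exists (l' ++ [x]). split.
    + apply walk_app with z; auto. econstructor; [apply adj_sym; exact A | constructor].
    + change (rev (x :: z :: l)) with (rev (z :: l) ++ [x]). rewrite <- E. reflexivity.
Qed.

Lemma walk_rev_Forall (G : graph) (P : G -> Prop) x l y :
  walk G x l y -> P x -> Forall P l -> exists l', walk G y l' x /\ Forall P l'.
Proof.
  intros W Px Fl. destruct (walk_rev _ _ _ _ W) as [l' [W' E]].
  exists l'. split; auto. apply Forall_forall. intros z Hz.
  assert (Hz' : In z (rev (x :: l))) by (rewrite <- E; right; auto).
  apply in_rev in Hz'. destruct Hz' as [<-|Hz']; auto.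
  rewrite Forall_forall in Fl. auto.
Qed.

Lemma walk_split (G : graph) l1 m l2 x y :
  walk G x (l1 ++ m :: l2) y -> walk G x (l1 ++ [m]) m /\ walk G m l2 y.
Proof.
  revert x; induction l1 as [|a l1 IH]; intros x W; simpl in *;
    inversion W as [|? ? ? ? A W']; subst.
  - split; auto. econstructor; eauto. constructor.
  - destruct (IH _ W') as [W1 W2]. split; auto. econstructor; eauto.
Qed.

Lemma walk_snoc (G : graph) x l y :
  walk G x l y -> l <> [] -> exists l' u, walk G x l' u /\ adj u y /\ S (length l') = length l.
Proof.
  intros W; induction W as [x|x z l y A W IH]; intros Hne; [congruence|].
  destruct l as [|a l].
  - inversion W; subst. exists [], x. repeat split; auto. constructor.
  - destruct IH as [l' [u [W' [A' L]]]]; [congruence|].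
    exists (z :: l'), u. repeat split; auto. econstructor; eauto. simpl in *. lia.
Qed.

Lemma cycle_rotate (G : graph) x l1 m l2 :
  walk G x (l1 ++ m :: l2) x -> NoDup (l1 ++ m :: l2) ->
  walk G m ((l2 ++ l1) ++ [m]) m /\ NoDup ((l2 ++ l1) ++ [m]) /\
  Permutation (l1 ++ m :: l2) ((l2 ++ l1) ++ [m]).
Proof.
  intros W Nd. destruct (walk_split _ _ _ _ _ _ W) as [W1 W2].
  assert (P : Permutation (l1 ++ m :: l2) ((l2 ++ l1) ++ [m])).
  { apply Permutation_trans with ((m :: l2) ++ l1); [apply Permutation_app_comm|].
    simpl. apply Permutation_cons_append. }
  split; [|split; [exact (Permutation_NoDup P Nd) | exact P]].
  rewrite <- app_assoc. apply walk_app with x; auto.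
Qed.

(* Rotate the cycle
   to start at a vertex m of maximal depth; both cycle-neighbours of m are then
   its parent, contradicting that they are distinct. *)
Lemma acyclic_of_parent_map (G : graph) (p : G -> G) (d : G -> nat) :
  (forall a b, adj a b -> (p a = b /\ d a = S (d b)) \/ (p b = a /\ d b = S (d a))) ->
  ~ has_cycle G.
Proof.
  intros Hedge [x [l [Wl [Hlen Hnd]]]].
  destruct (list_max_elem _ d l) as [m [Hm Hmax]]; [intro; subst; simpl in Hlen; lia|].
  destruct (in_split _ _ Hm) as [l1 [l2 ->]].
  destruct (cycle_rotate _ _ _ _ _ Wl Hnd) as [W [Nd P]].
  assert (Hin : forall z, In z (l2 ++ l1) -> d z <= d m).
  { intros z Hz. apply Hmax, Permutation_in with ((l2 ++ l1) ++ [m]);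
      [apply Permutation_sym; auto | apply in_or_app; auto]. }
  assert (Hlen' : 2 <= length (l2 ++ l1)).
  { apply Permutation_length in P. rewrite !length_app in P, Hlen.
    simpl in P, Hlen. rewrite !length_app. lia. }
  destruct (exists_last (l := l2 ++ l1)) as [[|v1 B0] [u HA]];
    [intro E; rewrite E in Hlen'; simpl in Hlen'; lia| rewrite HA in Hlen'; simpl in Hlen'; lia|].
  rewrite HA in W, Nd, Hin.
  assert (Hv1 : d v1 <= d m) by (apply Hin; left; auto).
  assert (Hu : d u <= d m) by (apply Hin; apply in_or_app; right; left; auto).
  rewrite <- app_assoc in W. simpl in W. inversion W as [|? ? ? ? Amv1]; subst.
  destruct (walk_split _ (v1 :: B0) u [m] _ _ W) as [_ Wu].
  inversion Wu as [|? ? ? ? Aum]; subst.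
  destruct (Hedge _ _ Amv1) as [[E1 _]|[_ E2]]; [|lia].
  destruct (Hedge _ _ Aum) as [[_ E3]|[E4 _]]; [lia|].
  rewrite <- !app_assoc in Nd. simpl in Nd. inversion Nd as [|? ? Hni].
  apply Hni. rewrite <- E1, E4. apply in_or_app. right. left. reflexivity.
Qed.

(* A code (keep, nbrs, label) describes one step down the universal tree of
   finite code sequences: the positions (in the parent's bag) of the vertices
   kept in the new bag, the positions (among the kept ones) of the neighbours
   of the new vertex, and a label distinguishing otherwise identical steps.
   The node c :: w creates the vertex (c, w). *)

Definition code := (list nat * list nat * nat)%type.
Definition keep (c : code) : list nat := fst (fst c).
Definition nbrs (c : code) : list nat := snd (fst c).
Definition uvertex := (code * list code)%type.

Fixpoint ubag (k : nat) (w : list code) : list uvertex :=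
  match w with
  | [] => []
  | c :: w' => (c, w') :: firstn k (select (keep c) (ubag k w'))
  end.

(* The vertices that share the bag of the node where x was created. *)
Definition kept (k : nat) (x : uvertex) : list uvertex :=
  firstn k (select (keep (fst x)) (ubag k (snd x))).

Definition uarc (k : nat) (x y : uvertex) : Prop := In y (select (nbrs (fst x)) (kept k x)).

Definition uadj (k : nat) (x y : uvertex) : Prop := x <> y /\ (uarc k x y \/ uarc k y x).

Lemma uadj_sym k x y : uadj k x y -> uadj k y x.
Proof. intros [Hne Harc]. split; [auto|tauto]. Qed.

Lemma uadj_irrefl k x : ~ uadj k x x.
Proof. intros [Hne _]; auto. Qed.

Lemma uvertex_countable : exists f : uvertex -> nat, forall x y, f x = f y -> x = y.
Proof.
  destruct CountableCodes.code_lists_countable as [g Hg].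
  exists (fun x => g (fst x :: snd x)). intros [c w] [c' w'] E.
  apply Hg in E. injection E as -> ->. reflexivity.
Qed.

Definition universal (k : nat) : graph :=
  Graph uvertex (uadj k) (uadj_sym k) (uadj_irrefl k) uvertex_countable.

Definition utree_adj (w w' : list code) : Prop :=
  (exists c, w' = c :: w) \/ (exists c, w = c :: w').

Lemma utree_adj_sym w w' : utree_adj w w' -> utree_adj w' w.
Proof. unfold utree_adj; tauto. Qed.

Lemma utree_adj_irrefl w : ~ utree_adj w w.
Proof.
  intros [[c E]|[c E]]; apply (f_equal (@length code)) in E; simpl in E; lia.
Qed.

Lemma code_seqs_countable : exists f : list code -> nat, forall x y, f x = f y -> x = y.
Proof. exact CountableCodes.code_lists_countable. Qed.

Definition utree : graph :=
  Graph (list code) utree_adj utree_adj_sym utree_adj_irrefl code_seqs_countable.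

Lemma utree_walk_to_root (w : utree) : exists l, walk utree w l ([] : utree).
Proof.
  induction w as [|c w [l W]]; [exists []; constructor|].
  exists ((w : utree) :: l). econstructor; eauto. right. exists c. reflexivity.
Qed.

Lemma utree_is_tree : is_tree utree.
Proof.
  split; [constructor; exact ([] : list code)|]. split.
  - intros x y _ _.
    destruct (utree_walk_to_root x) as [l1 W1]. destruct (utree_walk_to_root y) as [l2 W2].
    destruct (walk_rev _ _ _ _ W2) as [l2' [W2' _]].
    exists (l1 ++ l2'). split; [eapply walk_app; eauto|]. apply Forall_forall; auto.
  - apply (acyclic_of_parent_map utree (@tl code) (@length code)).
    intros a b [[c ->]|[c ->]]; simpl; auto.
Qed.

Lemma ubag_path_to_origin k (x : uvertex) (w : list code) :
  In x (ubag k w) ->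
  exists l, walk utree w l (fst x :: snd x) /\ Forall (fun u => In x (ubag k u)) l.
Proof.
  induction w as [|c w IH]; intros Hx; simpl in Hx; [destruct Hx|].
  destruct Hx as [<-|Hin].
  - exists []. split; constructor.
  - apply In_firstn, In_select in Hin. destruct (IH Hin) as [l [W F]].
    exists ((w : utree) :: l). split; [econstructor; eauto; right; exists c; auto|].
    constructor; auto.
Qed.

Lemma uarc_in_origin_bag k x y : uarc k x y -> In y (ubag k (fst x :: snd x)).
Proof. intros Hxy. right. exact (In_select _ _ _ Hxy). Qed.

Lemma universal_treewidth (k : nat) : treewidth_le (universal k) k.
Proof.
  exists utree, (fun w x => In x (ubag k w)). split; [split; [exact utree_is_tree|split]|].
  - intros x y [_ [Hxy|Hyx]].
    + exists (fst x :: snd x). split; [destruct x; left; auto|]. exact (uarc_in_origin_bag _ _ _ Hxy).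
    + exists (fst y :: snd y). split; [exact (uarc_in_origin_bag _ _ _ Hyx)|destruct y; left; auto].
  - intros x. split; [exists (fst x :: snd x); destruct x; left; auto|].
    intros w1 w2 In1 In2.
    destruct (ubag_path_to_origin k x w1 In1) as [l1 [W1 F1]].
    destruct (ubag_path_to_origin k x w2 In2) as [l2 [W2 F2]].
    destruct (walk_rev_Forall utree (fun u : utree => In x (ubag k u)) _ _ _ W2 In2 F2)
      as [l2' [W2' F2']].
    exists (l1 ++ l2'). split; [eapply walk_app; eauto|]. apply Forall_app; auto.
  - intros w. exists (ubag k w). split; auto.
    destruct w as [|c w]; simpl; [lia|]. rewrite length_firstn. lia.
Qed.

Section RootedTree.
Variable T : graph.
Hypothesis T_tree : is_tree T.

Definition root : T := epsilon (proj1 T_tree) (fun _ => True).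

Definition has_depth (t : T) (n : nat) : Prop := exists l, walk T root l t /\ length l = n.

Definition depth (t : T) : nat :=
  epsilon (inhabits 0) (fun n => has_depth t n /\ forall m, has_depth t m -> n <= m).

Lemma depth_spec t : has_depth t (depth t) /\ forall l, walk T root l t -> depth t <= length l.
Proof.
  assert (E : exists n, has_depth t n /\ forall m, has_depth t m -> n <= m).
  { apply least_nat. destruct (proj1 (proj2 T_tree) root t I I) as [l [W _]].
    exists (length l), l; auto. }
  destruct (epsilon_spec (inhabits 0) _ E) as [Hd Hmin]. fold (depth t) in Hd, Hmin.
  split; auto. intros l W. apply Hmin. exists l; auto.
Qed.

Lemma depth_root : depth root = 0.
Proof. pose proof (proj2 (depth_spec root) [] (walk_nil _ _)) as D. simpl in D. lia. Qed.

Lemma depth_zero t : depth t = 0 -> t = root.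
Proof.
  intros E. destruct (proj1 (depth_spec t)) as [l [W L]]. rewrite E in L.
  destruct l; [inversion W; auto|discriminate].
Qed.

Lemma depth_adj a b : adj a b -> depth b <= S (depth a).
Proof.
  intros A. destruct (proj1 (depth_spec a)) as [l [W L]].
  pose proof (proj2 (depth_spec b) (l ++ [b])) as D.
  rewrite length_app in D. simpl in D. rewrite L in D. rewrite <- Nat.add_1_r. apply D.
  apply walk_app with a; auto. econstructor; eauto. constructor.
Qed.

Definition is_parent (t u : T) : Prop :=
  (t = root /\ u = root) \/ (t <> root /\ adj t u /\ S (depth u) = depth t).

Definition parent (t : T) : T := epsilon (proj1 T_tree) (is_parent t).

Lemma parent_spec t : is_parent t (parent t).
Proof.
  apply (epsilon_spec (proj1 T_tree) (is_parent t)).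
  destruct (classic (t = root)) as [E|E]; [exists root; left; auto|].
  destruct (proj1 (depth_spec t)) as [l [W L]].
  destruct (walk_snoc _ _ _ _ W) as [l' [u [W' [A L']]]].
  { intros ->. inversion W; auto. }
  exists u. right. split; auto. split; [apply adj_sym; auto|].
  pose proof (proj2 (depth_spec u) l' W'). pose proof (depth_adj _ _ A). lia.
Qed.

Lemma parent_root : parent root = root.
Proof. destruct (parent_spec root) as [[_ E]|[E _]]; auto. congruence. Qed.

Lemma parent_adj t : t <> root -> adj t (parent t).
Proof. intros Ht. destruct (parent_spec t) as [[E _]|[_ [A _]]]; auto. congruence. Qed.

Lemma depth_parent t : depth (parent t) = depth t - 1.
Proof.
  destruct (parent_spec t) as [[-> ->]|[_ [_ E]]]; [rewrite depth_root; auto|lia].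
Qed.

(* ancestor n t: the n-th ancestor of t (the root once n >= depth t). *)
Fixpoint ancestor (n : nat) (t : T) : T :=
  match n with 0 => t | S n => ancestor n (parent t) end.

Lemma ancestor_S n t : ancestor (S n) t = parent (ancestor n t).
Proof. revert t; induction n; intros t; simpl; auto. rewrite <- IHn. reflexivity. Qed.

Lemma depth_ancestor n t : depth (ancestor n t) = depth t - n.
Proof. revert t; induction n; intros t; simpl; [lia|]. rewrite IHn, depth_parent. lia. Qed.

Lemma ancestor_root n t : depth t <= n -> ancestor n t = root.
Proof. intros Hn. apply depth_zero. rewrite depth_ancestor. lia. Qed.

Lemma ancestor_adj n t : n < depth t -> adj (ancestor n t) (ancestor (S n) t).
Proof.
  intros Hn. rewrite ancestor_S. apply parent_adj. intros E.
  pose proof (depth_ancestor n t) as D. rewrite E, depth_root in D. lia.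
Qed.

Lemma ancestor_inj t i j : i <= depth t -> j <= depth t -> ancestor i t = ancestor j t -> i = j.
Proof.
  intros Hi Hj E. pose proof (depth_ancestor i t). pose proof (depth_ancestor j t).
  rewrite E in *. lia.
Qed.

Lemma walk_up n t : n <= depth t ->
  walk T t (map (fun m => ancestor m t) (seq 1 n)) (ancestor n t).
Proof.
  induction n as [|n IH]; intros Hn; [constructor|].
  rewrite seq_S, map_app. apply walk_app with (ancestor n t); [apply IH; lia|].
  simpl. econstructor; [apply ancestor_adj; lia|constructor].
Qed.

Lemma walk_down n t : n <= depth t ->
  walk T (ancestor n t) (map (fun m => ancestor m t) (rev (seq 0 n))) t.
Proof.
  induction n as [|n IH]; intros Hn; [constructor|].
  rewrite seq_S, rev_app_distr. simpl.
  econstructor; [apply adj_sym, ancestor_adj; lia|]. apply IH. lia.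
Qed.

Lemma nearest_common_ancestor a b : exists i j,
  i <= depth a /\ j <= depth b /\ ancestor i a = ancestor j b /\
  forall i' j', ancestor i' a = ancestor j' b -> i + j <= i' + j'.
Proof.
  destruct (least_nat (fun s => exists i j, i + j = s /\ ancestor i a = ancestor j b))
    as [s [[i [j [Es Eij]]] Hmin]].
  { exists (depth a + depth b), (depth a), (depth b). rewrite !ancestor_root; auto. }
  assert (Hmin' : forall i' j', ancestor i' a = ancestor j' b -> s <= i' + j')
    by (intros i' j' E; apply Hmin; eauto).
  exists i, j. subst s. repeat split; auto.
  - destruct (le_lt_dec i (depth a)); auto. exfalso.
    assert (depth a + j >= i + j); [|lia]. apply Hmin'.
    rewrite <- Eij, !ancestor_root; auto; lia.
  - destruct (le_lt_dec j (depth b)); auto. exfalso.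
    assert (i + depth b >= i + j); [|lia]. apply Hmin'.
    rewrite Eij, !ancestor_root; auto; lia.
Qed.

(* Every edge of the tree joins a node to its parent: otherwise the two paths
   from its ends to their nearest common ancestor, closed by the edge, would
   form a cycle. *)
Lemma tree_edge_parent a b : adj a b -> parent a = b \/ parent b = a.
Proof.
  intros A. apply NNPP. intros Hn.
  assert (Na : parent a <> b) by tauto. assert (Nb : parent b <> a) by tauto. clear Hn.
  destruct (nearest_common_ancestor a b) as [i [j [Hia [Hjb [Eij Hmin]]]]].
  pose proof (depth_adj _ _ A) as D1. pose proof (depth_adj _ _ (adj_sym _ _ _ A)) as D2.
  assert (Hi1 : 1 <= i).
  { destruct i; [|lia]. exfalso. simpl in Eij. destruct j as [|[|j]].
    - simpl in Eij. subst. apply (adj_irrefl _ _ A).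
    - apply Nb. auto.
    - pose proof (depth_ancestor (S (S j)) b) as D. rewrite <- Eij in D. lia. }
  assert (Hj1 : 1 <= j).
  { destruct j; [|lia]. exfalso. simpl in Eij.
    pose proof (depth_ancestor i a) as D. rewrite Eij in D.
    destruct i as [|[|i]]; [lia| |lia]. apply Na. auto. }
  apply (proj2 (proj2 T_tree)). exists (ancestor i a),
    (map (fun m => ancestor m a) (rev (seq 0 i)) ++ b :: map (fun m => ancestor m b) (seq 1 j)).
  split; [|split].
  - apply walk_app with a; [apply walk_down; auto|].
    econstructor; eauto. rewrite Eij. apply walk_up; auto.
  - rewrite length_app, !length_map, length_rev, !length_seq. simpl.
    rewrite length_map, length_seq. lia.
  - apply Permutation_NoDup with
      (map (fun m => ancestor m a) (seq 0 i) ++ map (fun m => ancestor m b) (seq 0 (S j))).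
    { apply Permutation_app; [|reflexivity]. rewrite map_rev. apply Permutation_rev. }
    apply NoDup_app.
    + apply NoDup_map_on; [|apply seq_NoDup].
      intros x y Hx Hy. apply in_seq in Hx, Hy. apply ancestor_inj; lia.
    + apply NoDup_map_on; [|apply seq_NoDup].
      intros x y Hx Hy. apply in_seq in Hx, Hy. apply ancestor_inj; lia.
    + intros z Hz1 Hz2. apply in_map_iff in Hz1, Hz2.
      destruct Hz1 as [m [E1 Hm]]. destruct Hz2 as [m' [E2 Hm']].
      apply in_seq in Hm, Hm'.
      destruct (Nat.eq_dec m' j) as [->|Hne].
      * rewrite <- E2, <- Eij in E1. apply ancestor_inj in E1; lia.
      * assert (i + j <= m + m') by (apply Hmin; congruence). lia.
Qed.

Definition descendant (t a : T) : Prop := exists n, ancestor n a = t.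

Lemma walk_exits_through_parent (P : T -> Prop) t a l y :
  walk T a l y -> descendant t a -> ~ descendant t y -> Forall P l -> P (parent t).
Proof.
  intros W; induction W as [x|x z l y A W IH]; intros Da Dy F; [contradiction|].
  inversion F as [|? ? Pz Fl]; subst.
  destruct (classic (descendant t z)) as [Dz|Dz]; [apply IH; auto|].
  destruct (tree_edge_parent _ _ A) as [E|E].
  - destruct Da as [[|n] Hn]; simpl in Hn.
    + subst. auto.
    + exfalso. apply Dz. exists n. rewrite <- E. auto.
  - exfalso. apply Dz. destruct Da as [n Hn]. exists (S n). simpl. rewrite E. auto.
Qed.

Section TopBags.
Variable H : graph.
Variable B : T -> H -> Prop.
Hypothesis B_subtree : forall v : H, (exists t, B t v) /\ connected_set T (fun t => B t v).

Definition is_top (v : H) (t : T) : Prop := B t v /\ forall t', B t' v -> depth t <= depth t'.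

Definition top (v : H) : T := epsilon (proj1 T_tree) (is_top v).

Lemma top_spec v : is_top v (top v).
Proof.
  apply (epsilon_spec (proj1 T_tree) (is_top v)).
  destruct (least_nat (fun n => exists t, B t v /\ depth t = n)) as [n [[t [Ht <-]] Hmin]].
  { destruct (proj1 (B_subtree v)) as [t Ht]. exists (depth t), t; auto. }
  exists t. split; auto. intros t' Ht'. apply Hmin. exists t'; auto.
Qed.

Lemma top_in v : B (top v) v.
Proof. exact (proj1 (top_spec v)). Qed.

Lemma top_min v t : B t v -> depth (top v) <= depth t.
Proof. exact (proj2 (top_spec v) t). Qed.

Lemma bag_parent v t : B t v -> t <> top v -> B (parent t) v.
Proof.
  intros Bt Nt. destruct (proj2 (B_subtree v) t (top v) Bt (top_in v)) as [l [W F]].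
  apply (walk_exits_through_parent (fun t => B t v) t t l (top v)); auto.
  - exists 0; auto.
  - intros [[|n] Hn]; [simpl in Hn; auto|].
    pose proof (depth_ancestor (S n) (top v)) as D. rewrite Hn in D.
    pose proof (top_min v t Bt).
    assert (Er : top v = root) by (apply depth_zero; lia).
    apply Nt. rewrite <- Hn, Er. apply ancestor_root. rewrite depth_root; lia.
Qed.

Lemma top_ancestor v s : B s v -> exists a, ancestor a s = top v.
Proof.
  remember (depth s) as n eqn:En. assert (Hn : depth s <= n) by lia. clear En.
  revert s Hn. induction n as [|n IH]; intros s Hs Bs;
    (destruct (classic (s = top v)) as [E|E]; [exists 0; auto|]).
  - exfalso. assert (Es : s = root) by (apply depth_zero; lia).
    pose proof (top_min v s Bs) as D. subst s. rewrite depth_root in D.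
    apply E. symmetry. apply depth_zero. lia.
  - destruct (IH (parent s)) as [a Ha]; [rewrite depth_parent; lia| apply bag_parent; auto|].
    exists (S a). auto.
Qed.

Lemma bag_between v s b : B s v -> ancestor b s = top v ->
  forall j, j <= b -> B (ancestor j s) v.
Proof.
  intros Bs Eb j. induction j as [|j IH]; intros Hj; auto.
  rewrite ancestor_S. specialize (IH ltac:(lia)).
  destruct (classic (ancestor j s = top v)) as [E|E]; [|apply bag_parent; auto].
  assert (Er : ancestor j s = root).
  { apply depth_zero. rewrite <- Eb in E. pose proof (depth_ancestor j s).
    pose proof (depth_ancestor b s). rewrite E in *. lia. }
  rewrite Er, parent_root, <- Er. auto.
Qed.

Section Embedding.
Variable k : nat.
Hypothesis B_edges : forall u v : H, adj u v -> exists t, B t u /\ B t v.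
Hypothesis B_width : width_le H T B k.
Variable label : H -> nat.
Hypothesis label_inj : forall x y, label x = label y -> x = y.

Definition decide (P : Prop) : bool := if excluded_middle_informative P then true else false.

Lemma decide_true P : decide P = true <-> P.
Proof. unfold decide. destruct (excluded_middle_informative P); split; auto; discriminate. Qed.

Definition H_eq_dec (x y : H) : {x = y} + {x <> y} := excluded_middle_informative (x = y).

Definition bag_cover (t : T) : list H :=
  epsilon (inhabits []) (fun l => length l <= S k /\ forall v, B t v -> In v l).

Lemma bag_cover_spec t : length (bag_cover t) <= S k /\ forall v, B t v -> In v (bag_cover t).
Proof.
  apply (epsilon_spec (inhabits []) (fun l => length l <= S k /\ forall v, B t v -> In v l)).
  destruct (B_width t) as [l [L I]]. exists l. split; auto. lia.
Qed.

Definition bag_seq (t : T) : list H := nodup H_eq_dec (filter (fun x => decide (B t x)) (bag_cover t)).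

Lemma bag_seq_In t x : In x (bag_seq t) <-> B t x.
Proof.
  unfold bag_seq. rewrite nodup_In, filter_In, decide_true. split; [tauto|].
  intros Hb. split; auto. apply (proj2 (bag_cover_spec t)); auto.
Qed.

Lemma bag_seq_NoDup t : NoDup (bag_seq t).
Proof. apply NoDup_nodup. Qed.

Lemma bag_seq_length t : length (bag_seq t) <= S k.
Proof.
  eapply Nat.le_trans; [|exact (proj1 (bag_cover_spec t))].
  apply NoDup_incl_length; [apply bag_seq_NoDup|].
  intros x Hx. apply bag_seq_In in Hx. apply (proj2 (bag_cover_spec t)); auto.
Qed.

Definition earlier (t : T) (y x : H) : Prop :=
  exists pre rest, bag_seq t = pre ++ x :: rest /\ In y pre.

Lemma earlier_iff t pre x rest y : bag_seq t = pre ++ x :: rest -> (earlier t y x <-> In y pre).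
Proof.
  intros E. split; [|intros Hy; exists pre, rest; auto].
  intros [pre' [rest' [E' Hy]]]. rewrite E in E'.
  replace pre with pre'; auto. symmetry. eapply NoDup_prefix_unique; [|exact E'].
  rewrite <- E. apply bag_seq_NoDup.
Qed.

(* The vertices of the bag of t already inserted when x is inserted at t:
   those whose top bag lies higher up, and those preceding x in the bag. *)
Definition present (t : T) (x : H) : list H :=
  filter (fun y => decide (top y <> t \/ earlier t y x)) (bag_seq t).

Lemma present_In t x y : In y (present t x) <-> B t y /\ (top y <> t \/ earlier t y x).
Proof. unfold present. rewrite filter_In, decide_true, bag_seq_In. tauto. Qed.

(* x itself is not present, so at most k vertices are. *)
Lemma present_length t pre x rest : bag_seq t = pre ++ x :: rest -> top x = t ->
  length (present t x) <= k.
Proof.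
  intros E Tx. pose proof (bag_seq_length t) as Hlen.
  enough (length (present t x) < length (bag_seq t)) by lia.
  apply filter_length_lt with x; [rewrite E; apply in_or_app; right; left; auto|].
  cbv beta. destruct (decide (top x <> t \/ earlier t x x)) eqn:D; auto.
  apply (proj1 (decide_true _)) in D. exfalso. destruct D as [D|D]; [auto|].
  rewrite (earlier_iff _ _ _ _ _ E) in D.
  pose proof (bag_seq_NoDup t) as Nd. rewrite E in Nd.
  apply NoDup_remove_2 in Nd. apply Nd. apply in_or_app. auto.
Qed.

Definition position (s : list H) (x : H) : nat :=
  epsilon (inhabits 0) (fun i => nth_error s i = Some x).

Lemma select_positions s l : (forall y, In y l -> In y s) -> select (map (position s) l) s = l.
Proof.
  induction l as [|a l IH]; intros Hs; simpl; auto.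
  assert (E : nth_error s (position s a) = Some a).
  { apply (epsilon_spec (inhabits 0) (fun i => nth_error s i = Some a)).
    apply In_nth_error. apply Hs. left; auto. }
  rewrite E, IH; auto. intros; apply Hs; right; auto.
Qed.

Definition insertion_code (s p : list H) (x : H) : code :=
  (map (position s) p, map (position p) (filter (fun y => decide (adj x y)) p), label x).

(* A processing state: the current node of the universal tree and the list of
   vertices of H whose images form its bag. *)
Definition state := (list code * list H)%type.

Definition insert_step (t : T) (st : state) (x : H) : state :=
  if excluded_middle_informative (top x = t)
  then (insertion_code (snd st) (present t x) x :: fst st, x :: present t x) else st.

(* The state after processing the bags of ancestor n t, ..., t in turn. *)
Fixpoint process_path (n : nat) (t : T) : state :=
  match n with
  | 0 => fold_left (insert_step t) (bag_seq t) ([], [])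
  | S n => fold_left (insert_step t) (bag_seq t) (process_path n (parent t))
  end.

Definition start_state (t : T) : state :=
  match depth t with 0 => ([], []) | S n => process_path n (parent t) end.

Lemma start_state_root : start_state root = ([], []).
Proof. unfold start_state. rewrite depth_root. auto. Qed.

Lemma start_state_parent t : t <> root ->
  start_state t = fold_left (insert_step (parent t)) (bag_seq (parent t)) (start_state (parent t)).
Proof.
  intros Ht. assert (Hpos : depth t <> 0) by (intros E; apply Ht, depth_zero, E).
  pose proof (depth_parent t) as Dp.
  unfold start_state at 1. destruct (depth t) as [|n]; [congruence|].
  unfold start_state. replace (depth (parent t)) with n by lia.
  destruct n; reflexivity.
Qed.

Definition preceding (t : T) (x : H) : list H :=
  epsilon (inhabits []) (fun pre => exists rest, bag_seq t = pre ++ x :: rest).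

Lemma preceding_eq t pre x rest : bag_seq t = pre ++ x :: rest -> preceding t x = pre.
Proof.
  intros E.
  assert (Hs : exists rest', bag_seq t = preceding t x ++ x :: rest').
  { apply (epsilon_spec (inhabits []) (fun pre => exists rest, bag_seq t = pre ++ x :: rest)).
    exists pre, rest; auto. }
  destruct Hs as [rest' E']. symmetry. eapply NoDup_prefix_unique; [|rewrite <- E; exact E'].
  rewrite <- E. apply bag_seq_NoDup.
Qed.

Definition state_before (x : H) : state :=
  fold_left (insert_step (top x)) (preceding (top x) x) (start_state (top x)).

Definition embed (x : H) : uvertex :=
  (insertion_code (snd (state_before x)) (present (top x) x) x, fst (state_before x)).

Lemma embed_inj x y : embed x = embed y -> x = y.
Proof. intros E. apply label_inj. apply (f_equal (fun z => snd (fst z))) in E. exact E. Qed.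

Definition state_ok (t : T) (pre : list H) (st : state) : Prop :=
  ubag k (fst st) = map embed (snd st) /\
  forall y, B t y -> (top y <> t \/ In y pre) -> In y (snd st).

Lemma present_in_state t pre st x rest : state_ok t pre st -> bag_seq t = pre ++ x :: rest ->
  forall y, In y (present t x) -> In y (snd st).
Proof.
  intros [_ I] E y Hy. apply present_In in Hy. destruct Hy as [By C]. apply I; auto.
  destruct C as [C|C]; auto. right. eapply earlier_iff; eauto.
Qed.

Lemma kept_insertion t pre w s x rest : state_ok t pre (w, s) ->
  bag_seq t = pre ++ x :: rest -> top x = t ->
  firstn k (select (map (position s) (present t x)) (ubag k w)) = map embed (present t x).
Proof.
  intros I E Tx. pose proof (present_in_state _ _ _ _ _ I E) as Hp.
  destruct I as [I1 _]. simpl in I1, Hp. rewrite I1, select_map, select_positions; auto.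
  apply firstn_all2. rewrite length_map. eapply present_length; eauto.
Qed.

Lemma process_ok t : state_ok t [] (start_state t) ->
  forall pre rest, bag_seq t = pre ++ rest ->
  state_ok t pre (fold_left (insert_step t) pre (start_state t)).
Proof.
  intros I0 pre. induction pre as [|x pre IH] using rev_ind; intros rest E; auto.
  rewrite <- app_assoc in E. simpl in E. specialize (IH (x :: rest) E).
  rewrite fold_left_app. simpl.
  destruct (fold_left (insert_step t) pre (start_state t)) as [w s] eqn:Ef.
  unfold insert_step. simpl. destruct (excluded_middle_informative (top x = t)) as [Tx|Tx].
  - split.
    + simpl. f_equal.
      * unfold embed, state_before. rewrite Tx, (preceding_eq _ _ _ _ E), Ef. reflexivity.
      * eapply kept_insertion; eauto.
    + simpl. intros y By C. destruct (classic (y = x)) as [->|Nyx]; [left; auto|right].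
      apply present_In. split; auto. destruct C as [C|C]; auto. right.
      apply (earlier_iff _ _ _ _ _ E). apply in_app_or in C.
      destruct C as [C|[C|[]]]; [auto|congruence].
  - split; [exact (proj1 IH)|]. intros y By C. apply (proj2 IH); auto.
    destruct C as [C|C]; auto. apply in_app_or in C.
    destruct C as [C|[C|[]]]; [auto|subst; auto].
Qed.

Lemma start_ok t : state_ok t [] (start_state t).
Proof.
  remember (depth t) as n eqn:En. assert (Hn : depth t <= n) by lia. clear En.
  revert t Hn. induction n as [|n IH]; intros t Ht;
    (destruct (classic (t = root)) as [->|Nr];
      [ rewrite start_state_root; split; auto; intros y By [C|[]]; exfalso; apply C;
        apply depth_zero; pose proof (top_min y root By); rewrite depth_root in *; lia |]).
  - exfalso. apply Nr. apply depth_zero. lia.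
  - rewrite start_state_parent; auto.
    destruct (process_ok (parent t) (IH (parent t) ltac:(rewrite depth_parent; lia))
                (bag_seq (parent t)) [] (eq_sym (app_nil_r _))) as [I1 I2].
    split; auto. intros y By [C|[]]. apply I2; [|right; apply bag_seq_In]; apply bag_parent; auto.
Qed.

Lemma state_before_ok x : exists rest, bag_seq (top x) = preceding (top x) x ++ x :: rest /\
  state_ok (top x) (preceding (top x) x) (state_before x).
Proof.
  assert (Hx : In x (bag_seq (top x))) by (apply bag_seq_In, top_in).
  destruct (in_split _ _ Hx) as [pre [rest E]].
  rewrite (preceding_eq _ _ _ _ E). exists rest. split; auto.
  unfold state_before. rewrite (preceding_eq _ _ _ _ E).
  apply process_ok with (x :: rest); auto. apply start_ok.
Qed.

Lemma uarc_embed_iff u y :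
  uarc k (embed u) y <-> exists v, y = embed v /\ In v (present (top u) u) /\ adj u v.
Proof.
  destruct (state_before_ok u) as [rest [E I]].
  unfold uarc, kept, embed at 1, keep, nbrs. simpl.
  destruct (state_before u) as [w s] eqn:Es. simpl.
  rewrite (kept_insertion _ _ _ _ _ _ I E eq_refl), select_map, select_positions.
  - rewrite in_map_iff. split.
    + intros [v [Ev Hv]]. apply filter_In in Hv. destruct Hv as [Hv Ha].
      exists v. split; auto. split; auto. apply (proj1 (decide_true _)); auto.
    + intros [v [Ev [Hv Ha]]]. exists v. split; auto. apply filter_In. split; auto.
      apply (proj2 (decide_true _)); auto.
  - intros z Hz. apply filter_In in Hz. tauto.
Qed.

Lemma uarc_of_present u v : B (top u) v -> (top v <> top u \/ earlier (top u) v u) ->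
  adj u v -> uarc k (embed u) (embed v).
Proof.
  intros Bv C A. apply uarc_embed_iff. exists v. repeat split; auto. apply present_In. auto.
Qed.

(* An edge uv with v in the top bag of u is recorded by whichever of u, v is
   inserted later. *)
Lemma edge_recorded u v : B (top u) v -> adj u v ->
  uarc k (embed u) (embed v) \/ uarc k (embed v) (embed u).
Proof.
  intros Bv A. destruct (classic (top v = top u)) as [Et|Nt]; [|left; apply uarc_of_present; auto].
  assert (Hu : In u (bag_seq (top u))) by (apply bag_seq_In, top_in).
  destruct (in_split _ _ Hu) as [pre [rest E]].
  assert (Hv : In v (bag_seq (top u))) by (apply bag_seq_In; auto).
  rewrite E in Hv. apply in_app_or in Hv. destruct Hv as [Hv|[<-|Hv]].
  - left. apply uarc_of_present; auto. right. exists pre, rest. auto.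
  - exfalso. apply (adj_irrefl _ _ A).
  - right. destruct (in_split _ _ Hv) as [r1 [r2 E2]].
    apply uarc_of_present; [rewrite Et; apply top_in| |apply adj_sym; auto].
    right. rewrite Et. exists (pre ++ u :: r1), r2. split.
    + rewrite E, E2, <- app_assoc. reflexivity.
    + apply in_or_app. right. left. auto.
Qed.

(* The two ends of an edge share a bag; the higher of their top bags lies on
   the path between that bag and the lower one, so it contains both ends. *)
Lemma edge_in_top_bag u v : adj u v -> B (top u) v \/ B (top v) u.
Proof.
  intros A. destruct (B_edges u v A) as [s [Bu Bv]].
  destruct (top_ancestor u s Bu) as [a Ea]. destruct (top_ancestor v s Bv) as [b Eb].
  destruct (le_lt_dec a b).
  - left. rewrite <- Ea. apply (bag_between v s b); auto.
  - right. rewrite <- Eb. apply (bag_between u s a); auto. lia.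
Qed.

Lemma embed_induced : induced_subgraph H (universal k).
Proof.
  exists embed. split; [exact embed_inj|]. intros u v. split.
  - intros A. split.
    + intros E. apply embed_inj in E. subst. apply (adj_irrefl _ _ A).
    + destruct (edge_in_top_bag u v A) as [Bv|Bu].
      * apply edge_recorded; auto.
      * assert (uarc k (embed v) (embed u) \/ uarc k (embed u) (embed v)); [|tauto].
        apply edge_recorded; [|apply adj_sym]; auto.
  - intros [_ [R|R]]; apply uarc_embed_iff in R; destruct R as [v' [E [_ A]]];
      apply embed_inj in E; subst; auto. apply adj_sym; auto.
Qed.

End Embedding.
End TopBags.
End RootedTree.

Theorem mainTheorem13 : forall k : nat,
  exists U : graph, treewidth_le U k /\
    forall H : graph, treewidth_le H k -> induced_subgraph H U.
Proof.
  intros k. exists (universal k). split; [apply universal_treewidth|].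
  intros H [T [B [[T_tree [B_edges B_subtree]] B_width]]].
  destruct (countable H) as [label label_inj].
  exact (embed_induced T T_tree H B B_subtree k B_edges B_width label label_inj).
Qed.
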